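(* Let $X$ be an algebraic variety and $Z\subset X$ a Zariski closed subset. Then for every $s\in\mathcal{S}(X)$, the restriction $s|_Z$ belongs to $\mathcal{S}(Z)$.
   Context: An affine algebraic variety is a topological space with a sheaf of real-valued functions isomorphic as a ringed space (via a ''closed embedding'' $i$) to an algebraic set $Y\subset\mathbb{R}^n$ (common zero locus of real polynomials) with its Zariski topology and sheaf of regular functions. An algebraic variety is a topological space with a sheaf of real-valued functions admitting a finite open cover by affine algebraic varieties; Zariski open and Zariski closed subsets of algebraic varieties (with the induced structure) are algebraic varieties, and Zariski open/closed subsets of affine ones are affine. For an algebraic set $Y\subset\mathbb{R}^n$, $\mathcal{S}(Y)$ is the space of restrictions to $Y$ of classical Schwartz functions on $\mathbb{R}^n$; for affine $X$, $\mathcal{S}(X)=\{f:f\circ i^{-1}\in\mathcal{S}(i(X))\}$ (independent of $i$). For a general algebraic variety $X$ with a finite affine open cover $X=\bigcup_{i=1}^kX_i$, $\mathcal{S}(X)$ is the set of functions of the form $\sum_{i=1}^k\mathrm{Ext}_{X_i}^X(s_i)$ with $s_i\in\mathcal{S}(X_i)$ and $\mathrm{Ext}$ denoting extension by zero (this is independent of the cover). *)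

From HB Require Import structures.
From mathcomp Require Import all_boot all_order all_algebra.
From mathcomp Require Import all_classical all_reals all_analysis.
Set Implicit Arguments. Unset Strict Implicit. Unset Printing Implicit Defensive.
Import Order.TTheory GRing.Theory Num.Theory.
Import numFieldNormedType.Exports.
Local Open Scope classical_set_scope.
Local Open Scope ring_scope.

Section RealAlgebraicVarieties.
Context {R : realType}.

Inductive is_poly (n : nat) : ('rV[R]_n -> R) -> Prop :=
| poly_const (c : R) : is_poly (fun _ => c)
| poly_coord (i : 'I_n) : is_poly (fun x => x ord0 i)
| poly_add p q : is_poly p -> is_poly q -> is_poly (fun x => p x + q x)
| poly_mul p q : is_poly p -> is_poly q -> is_poly (fun x => p x * q x).

Definition algebraic_set (n : nat) (Y : set 'rV[R]_n) : Prop :=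
  exists P : set ('rV[R]_n -> R),
    (forall p, P p -> is_poly p) /\ Y = [set x | forall p, P p -> p x = 0].

Definition zclosed (n : nat) (Y A : set 'rV[R]_n) : Prop :=
  exists B, algebraic_set B /\ A = Y `&` B.
Definition zopen (n : nat) (Y U : set 'rV[R]_n) : Prop :=
  U `<=` Y /\ zclosed Y (Y `\` U).

Definition regular (n : nat) (Y U : set 'rV[R]_n) (f : 'rV[R]_n -> R) : Prop :=
  forall x, U x -> exists p q V, [/\ is_poly p, is_poly q, zopen Y V,
    V x /\ V `<=` U & forall y, V y -> q y != 0 /\ f y = p y / q y].

Definition pderiv (n : nat) (i : 'I_n) (f : 'rV[R]_n -> R) : 'rV[R]_n -> R :=
  fun x => 'D_(delta_mx 0 i) f x.
Definition iter_pderiv (n : nat) (s : seq 'I_n) (f : 'rV[R]_n -> R) :=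
  foldr (@pderiv n) f s.
Definition schwartz (n : nat) (f : 'rV[R]_n -> R) : Prop :=
  [/\ forall s, continuous (iter_pderiv s f),
      forall s i x, derivable (iter_pderiv s f) x (delta_mx 0 i)
    & forall s p, is_poly p -> exists M : R,
        forall x, `|p x * iter_pderiv s f x| <= M].

(* ---------- Spaces with a sheaf of real functions ----------
   A space is given by a carrier S : set T, a family of open sets op
   (subsets of S), and O U = the set of functions (T -> R, only values on U
   matter) that are sections of the sheaf on the open U. *)
Definition is_topology (T : Type) (S : set T) (op : set (set T)) : Prop :=
  [/\ forall U, op U -> U `<=` S, op set0, op S,
      forall U V, op U -> op V -> op (U `&` V)
    & forall (I : Type) (F : I -> set T), (forall i, op (F i)) ->
        op (\bigcup_i F i)].

Definition is_fun_sheaf (T : Type) (S : set T) (op : set (set T))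
    (O : set T -> set (T -> R)) : Prop :=
  [/\ forall U f g, op U -> O U f -> (forall x, U x -> f x = g x) -> O U g,
      forall U V f, op U -> op V -> V `<=` U -> O U f -> O V f
    & forall U f, op U ->
        (forall x, U x -> exists V, [/\ op V, V x, V `<=` U & O V f]) ->
        O U f].

(* an isomorphism of ringed spaces phi from (S, op, O) onto the algebraic set Y
   with its Zariski topology and sheaf of regular functions *)
Definition affine_chart (T : Type) (S : set T) (op : set (set T))
    (O : set T -> set (T -> R)) (n : nat) (Y : set 'rV[R]_n)
    (phi : T -> 'rV[R]_n) : Prop :=
  [/\ algebraic_set Y,
      (forall x y, S x -> S y -> phi x = phi y -> x = y),
      phi @` S = Y,
      (forall U, U `<=` S -> (op U <-> zopen Y (phi @` U)))
    & forall V g, zopen Y V ->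
        (regular Y V g <-> O (S `&` phi @^-1` V) (g \o phi))].

Definition affine (T : Type) (S : set T) (op : set (set T))
    (O : set T -> set (T -> R)) : Prop :=
  exists n (Y : set 'rV[R]_n) phi, affine_chart S op O Y phi.

Definition open_opens (T : Type) (op : set (set T)) (W : set T) : set (set T) :=
  [set U | op U /\ U `<=` W].

(* induced structure on a closed subset Z *)
Definition closed_opens (T : Type) (op : set (set T)) (Z : set T)
    : set (set T) :=
  [set V | exists U, op U /\ V = U `&` Z].
Definition closed_sheaf (T : Type) (op : set (set T))
    (O : set T -> set (T -> R)) (Z : set T) : set T -> set (T -> R) :=
  fun V f => forall x, V x -> exists U g,
    [/\ op U, U x, O U g & forall y, U y -> V y -> f y = g y].

Definition variety (T : Type) (S : set T) (op : set (set T))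
    (O : set T -> set (T -> R)) : Prop :=
  [/\ is_topology S op, is_fun_sheaf S op O
    & exists k (W : 'I_k -> set T), [/\ forall i, op (W i),
        \bigcup_i W i = S
      & forall i, affine (W i) (open_opens op (W i)) O]].

Definition schwartz_affine (T : Type) (S : set T) (op : set (set T))
    (O : set T -> set (T -> R)) (s : T -> R) : Prop :=
  exists n (Y : set 'rV[R]_n) phi, affine_chart S op O Y phi /\
    exists f, schwartz f /\ forall x, S x -> s x = f (phi x).

(* Schwartz functions on an algebraic variety: sums of extensions by zero
   of Schwartz functions on the members of a finite affine open cover *)
Definition schwartz_var (T : Type) (S : set T) (op : set (set T))
    (O : set T -> set (T -> R)) (s : T -> R) : Prop :=
  exists k (W : 'I_k -> set T) (si : 'I_k -> T -> R),
    [/\ forall i, op (W i), \bigcup_i W i = S,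
        forall i, schwartz_affine (W i) (open_opens op (W i)) O (si i)
      & forall x, S x ->
          s x = \sum_(i < k) (if `[< W i x >] then si i x else 0)].

End RealAlgebraicVarieties.

From HB Require Import structures.
From mathcomp Require Import all_boot all_order all_algebra.
From mathcomp Require Import all_classical all_reals all_analysis.
Import GRing.Theory.
Local Open Scope classical_set_scope.
Local Open Scope ring_scope.

(* If [phi] maps an affine open [W] isomorphically onto the algebraic set [Y],
   then, [W \ Z] being open, [phi (W \ Z) = Y \ B] for an algebraic [B], so
   [phi] maps [W `&` Z] bijectively onto the algebraic set [Y `&` B].  Opens of
   [W `&` Z] are traces of opens of [W], and regular functions on [Y `&` B] are
   locally traces of quotients of polynomials, so this bijection is again a
   closed embedding.  Hence the affine cover [W_i] of [S] restricts to an affine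
   cover [W_i `&` Z] of [Z], and a Schwartz function on [W_i] restricts to one
   on [W_i `&` Z], witnessed by the same Schwartz function on [R^n]. *)

Section ZariskiTopology.
Context {R : realType} {n : nat}.
Implicit Types (Y U V B : set 'rV[R]_n) (p q : 'rV[R]_n -> R).

Lemma algebraic_setI A B :
  algebraic_set A -> algebraic_set B -> algebraic_set (A `&` B).
Proof.
move=> [P [HP ->]] [Q [HQ ->]]; exists (P `|` Q); split.
  by move=> p [/HP|/HQ].
apply/seteqP; split=> x /=; first by move=> [h1 h2] p [/h1|/h2].
by move=> h; split=> p Pp; apply: h; [left|right].
Qed.

(* The zero set of a union is cut out by the pairwise products. *)
Lemma algebraic_setU A B :
  algebraic_set A -> algebraic_set B -> algebraic_set (A `|` B).
Proof.
move=> [P [HP ->]] [Q [HQ ->]].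
exists [set r | exists p q, [/\ P p, Q q & r = (fun x => p x * q x)]]; split.
  by move=> r [p [q [Pp Qq ->]]]; apply: poly_mul; [apply: HP|apply: HQ].
apply/seteqP; split=> x /=.
  move=> [h|h] r [p [q [Pp Qq ->]]].
    by rewrite (h _ Pp) mul0r.
  by rewrite (h _ Qq) mulr0.
move=> h; case: (pselect (forall p, P p -> p x = 0)) => [|hA]; [by left|right].
move=> q Qq; apply: contrapT => hq; apply: hA => p Pp.
have /eqP := h _ (ex_intro _ p (ex_intro _ q (And3 Pp Qq erefl))).
by rewrite mulf_eq0 => /orP[/eqP //|/eqP].
Qed.

Lemma algebraic_set_zeros q : is_poly q -> algebraic_set [set y | q y = 0].
Proof.
move=> pq; exists [set q]; split; first by move=> p ->.
by apply/seteqP; split=> x /= h; [move=> p -> | apply: h].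
Qed.

Lemma zopenP Y U : zopen Y U <-> exists2 B, algebraic_set B & U = Y `\` B.
Proof.
split=> [[UY [B [aB eB]]]|[B aB ->]].
  by exists B; rewrite // -[U](setIidr UY) -setDD eB setDIr setDv set0U.
by split; [exact: subDsetl | exists B; rewrite setDD].
Qed.

Lemma zopen_setD Y B : algebraic_set B -> zopen Y (Y `\` B).
Proof. by move=> aB; apply/zopenP; exists B. Qed.

Lemma zopen_setD_zeros Y B q : algebraic_set B -> is_poly q ->
  zopen Y (Y `\` (B `|` [set y | q y = 0])).
Proof.
move=> aB pq; apply/zopen_setD/algebraic_setU => //.
exact: algebraic_set_zeros.
Qed.

Lemma zopenI Y U V : zopen Y U -> zopen Y V -> zopen Y (U `&` V).
Proof.
move=> /zopenP[B1 aB1 ->] /zopenP[B2 aB2 ->]; apply/zopenP.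
by exists (B1 `|` B2); [exact: algebraic_setU | rewrite setDUr].
Qed.

Lemma zopen_subset Y Y' V :
  Y' `<=` Y -> zopen Y V -> zopen Y' (Y' `&` V).
Proof.
move=> sY /zopenP[B aB ->]; apply/zopenP.
by exists B; rewrite // setIDA setIidl.
Qed.

Lemma regular_div Y B p q : is_poly p -> is_poly q -> algebraic_set B ->
  regular Y (Y `\` (B `|` [set y | q y = 0])) (fun y => p y / q y).
Proof.
move=> pp pq aB x Ux; exists p, q, (Y `\` (B `|` [set y | q y = 0])).
split=> //; first exact: zopen_setD_zeros.
  by split.
by move=> y [_ /not_orP[_ /eqP]].
Qed.

End ZariskiTopology.

Section ClosedSubsetOfAffineOpen.
Context {R : realType} {T : Type}.
Context (op : set (set T)) (O : set T -> set (T -> R)) (W Z : set T).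
Hypothesis opI : forall U V, op U -> op V -> op (U `&` V).
Hypothesis sheaf_ext : forall U f g, op U -> O U f ->
  (forall x, U x -> f x = g x) -> O U g.
Hypothesis sheaf_restr : forall U V f, op U -> op V -> V `<=` U ->
  O U f -> O V f.
Hypothesis opW : op W.
Hypothesis opWDZ : op (W `\` Z).

Section Chart.
Context {n : nat} (Y : set 'rV[R]_n) (phi : T -> 'rV[R]_n).
Hypothesis chart : affine_chart W (open_opens op W) O Y phi.

Let phi_inj x y : W x -> W y -> phi x = phi y -> x = y.
Proof. by case: chart => _ inj _ _ _; apply: inj. Qed.

Let image_W : phi @` W = Y.
Proof. by case: chart. Qed.

Let chart_zopen U : op U -> U `<=` W -> zopen Y (phi @` U).
Proof. by case: chart => _ _ _ top _ oU sU; apply/top. Qed.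

Let chart_open U : U `<=` W -> zopen Y (phi @` U) -> op U.
Proof. by case: chart => _ _ _ top _ sU /top[]. Qed.

Let chart_regular V g : zopen Y V ->
  regular Y V g <-> O (W `&` phi @^-1` V) (g \o phi).
Proof. by case: chart => _ _ _ _; apply. Qed.

Lemma image_chart_preimage V : phi @` (W `&` phi @^-1` V) = Y `&` V.
Proof.
apply/seteqP; split=> [_ [x [Wx Vx] <-]|y [+ Vy]]; first by rewrite -image_W.
by rewrite -image_W => -[x Wx xy]; exists x; rewrite // /preimage /= xy.
Qed.

Lemma preimage_chart_image U : U `<=` W -> W `&` phi @^-1` (phi @` U) = U.
Proof.
move=> sU; apply/seteqP; split=> [x [Wx [u Uu ux]]|x Ux].
  by rewrite -(phi_inj _ _ (sU _ Uu) Wx ux).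
by split; [exact: sU | exists x].
Qed.

Lemma image_chart_setD A : phi @` (W `\` A) = Y `\` phi @` (W `&` A).
Proof.
apply/seteqP; split=> [_ [x [Wx nAx] <-]|y [+ nAy]].
  split; first by rewrite -image_W; exists x.
  by move=> [u [Wu Au] ux]; apply: nAx; rewrite -(phi_inj _ _ Wu Wx ux).
rewrite -image_W => -[x Wx xy]; exists x => //.
by split=> // Ax; apply: nAy; exists x.
Qed.

Lemma image_chart_setI A B : A `<=` W -> B `<=` W ->
  phi @` (A `&` B) = phi @` A `&` phi @` B.
Proof.
move=> sA sB; apply/seteqP; split=> [_ [x [Ax Bx] <-]|_ [[x Ax <-] [y By yx]]].
  by split; exists x.
by have yx' := phi_inj _ _ (sB _ By) (sA _ Ax) yx; subst y; exists x.
Qed.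

Let algebraic_Y : algebraic_set Y.
Proof. by case: chart. Qed.

Local Notation YZ := (phi @` (W `&` Z)).

Let YZ_sub : YZ `<=` Y.
Proof. by rewrite -image_W; apply: image_subset; exact: subIsetl. Qed.

Lemma algebraic_set_image_closed : algebraic_set YZ.
Proof.
have /zopenP[B aB eB] := chart_zopen _ opWDZ (@subDsetl _ W Z).
suff -> : YZ = Y `&` B by exact: algebraic_setI.
have eD : Y `\` YZ = Y `\` B by rewrite -image_chart_setD.
by rewrite -[Y `&` B]setDD -eD setDD (setIidr YZ_sub).
Qed.

Lemma closed_chart_open U : U `<=` W `&` Z ->
  open_opens (closed_opens op Z) (W `&` Z) U <-> zopen YZ (phi @` U).
Proof.
move=> sU; split=> [[[U0 [oU0 eU]] _]|/zopenP[B aB eB]].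
  have /zopenP[B aB eB] := chart_zopen _ (opI _ _ oU0 opW) (@subIsetr _ U0 W).
  have -> : U = (U0 `&` W) `&` (W `&` Z).
    apply/seteqP; split=> [x Ux|x [[U0x _] [_ Zx]]]; last by rewrite eU.
    by have [Wx Zx] := sU _ Ux; move: Ux; rewrite eU => -[].
  rewrite (image_chart_setI _ _ (@subIsetr _ U0 W) (@subIsetl _ W Z)) eB.
  by apply/zopenP; exists B; rewrite // setIDAC setIidr // => y [/YZ_sub].
pose U0 := W `&` phi @^-1` (Y `\` B).
have oU0 : op U0.
  apply: chart_open; first exact: subIsetl.
  rewrite image_chart_preimage setIidr; last exact: subDsetl.
  exact: zopen_setD.
split=> //; exists U0; split=> //.
apply/seteqP; split=> [x Ux|x [[Wx [Yx nBx]] Zx]].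
  have [Wx Zx] := sU _ Ux.
  have [_ nBx] : (YZ `\` B) (phi x) by rewrite -eB; exists x.
  by split=> //; split=> //; split=> //; apply: YZ_sub; exists x.
have [u Uu ux] : (phi @` U) (phi x) by rewrite eB; split=> //; exists x.
by rewrite -(phi_inj _ _ (sU _ Uu).1 Wx ux).
Qed.

Lemma closed_sheaf_of_regular V g : regular YZ V g ->
  closed_sheaf op O Z ((W `&` Z) `&` phi @^-1` V) (g \o phi).
Proof.
move=> reg x [[Wx Zx] Vx].
have [p [q [V' [pp pq /zopenP[B aB eV'] [V'x _] hq]]]] := reg _ Vx.
pose C := B `|` [set y | q y = 0].
have zC : zopen Y (Y `\` C) by exact: zopen_setD_zeros.
have V'_of y : W y -> Z y -> ~ B (phi y) -> V' (phi y).
  by move=> Wy Zy nBy; rewrite eV'; split=> //; exists y.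
exists (W `&` phi @^-1` (Y `\` C)), ((fun y => p y / q y) \o phi); split.
- apply: chart_open; first exact: subIsetl.
  by rewrite image_chart_preimage setIidr //; exact: subDsetl.
- have [_ nBx] : (YZ `\` B) (phi x) by rewrite -eV'.
  split=> //; split; first by rewrite -image_W; exists x.
  by move=> [//|/eqP q0]; have [] := hq _ V'x; rewrite q0.
- exact/chart_regular/regular_div.
- move=> y [Wy [_ nCy]] [[_ Zy] _] /=.
  by have [_ ->] := hq _ (V'_of y Wy Zy (fun By => nCy (or_introl By))).
Qed.

Lemma regular_of_section (x0 : T) U g0 : op U -> U `<=` W -> O U g0 ->
  exists h, regular Y (phi @` U) h /\ forall z, U z -> h (phi z) = g0 z.
Proof.
move=> oU sU Og0.
have injW : {in W &, injective phi}.
  by move=> a b; rewrite !in_setE; exact: phi_inj.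
pose h := g0 \o pinv_ (fun=> x0) W phi.
have hK z : U z -> h (phi z) = g0 z.
  by move=> Uz; rewrite /h /= pinvKV // in_setE; exact: sU.
exists h; split=> //; apply/chart_regular; first exact: chart_zopen.
by rewrite preimage_chart_image //; apply: sheaf_ext oU Og0 _ => z /hK.
Qed.

Lemma regular_of_closed_sheaf V g : zopen YZ V ->
  closed_sheaf op O Z ((W `&` Z) `&` phi @^-1` V) (g \o phi) -> regular YZ V g.
Proof.
move=> zV sec _ /[dup] /zV.1[x [Wx Zx] <-] Vx.
have [U [g0 [oU Ux Og0 eg]]] := sec x (conj (conj Wx Zx) Vx).
have oUW := opI _ _ oU opW.
have OUW : O (U `&` W) g0 by apply: sheaf_restr oU oUW _ Og0; exact: subIsetl.
have [h [regh hK]] := regular_of_section x _ _ oUW (@subIsetr _ U W) OUW.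
have [p [q [V' [pp pq zV' [V'x sV'] hq]]]] :=
  regh (phi x) (ex_intro2 _ _ x (conj Ux Wx) erefl).
exists p, q, (YZ `&` V' `&` V); split=> //.
- by apply: zopenI => //; apply: zopen_subset zV'.
- split; last exact: subIsetr.
  by split=> //; split=> //; exists x.
move=> _ [[[z [Wz Zz] <-] V'z] Vz]; have [qz hz] := hq _ V'z; split=> //.
have [u [Uu Wu] uz] := sV' _ V'z; have {}uz := phi_inj _ _ Wu Wz uz; subst u.
by rewrite -hz hK //; exact: eg z Uu (conj (conj Wz Zz) Vz).
Qed.

Lemma affine_chart_closed : affine_chart (W `&` Z)
  (open_opens (closed_opens op Z) (W `&` Z)) (closed_sheaf op O Z) YZ phi.
Proof.
split.
- exact: algebraic_set_image_closed.
- by move=> x y [Wx _] [Wy _]; apply: phi_inj.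
- by [].
- exact: closed_chart_open.
- move=> V g zV; split; first exact: closed_sheaf_of_regular.
  exact: regular_of_closed_sheaf.
Qed.

End Chart.

Lemma schwartz_affine_closed s :
  schwartz_affine W (open_opens op W) O s ->
  schwartz_affine (W `&` Z) (open_opens (closed_opens op Z) (W `&` Z))
    (closed_sheaf op O Z) s.
Proof.
move=> [n [Y [phi [chart [f [sf sE]]]]]].
exists n, (phi @` (W `&` Z)), phi; split.
  exact: affine_chart_closed _ _ chart.
by exists f; split=> // x [Wx _]; apply: sE.
Qed.

End ClosedSubsetOfAffineOpen.

Theorem proposition5p3 (R : realType) (T : Type) (S : set T)
    (op : set (set T)) (O : set T -> set (T -> R)) (Z : set T) (s : T -> R) :
  variety S op O ->
  Z `<=` S -> op (S `\` Z) ->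
  schwartz_var S op O s ->
  schwartz_var Z (closed_opens op Z) (closed_sheaf op O Z) s.
Proof.
move=> [[_ _ _ opI _] [sheaf_ext sheaf_restr _] _] ZS oSZ.
move=> [k [W [si [opW coverW affW sE]]]].
have WS i : W i `<=` S by rewrite -coverW => x Wx; exists i.
have opWDZ i : op (W i `\` Z).
  by rewrite -(setIidl (WS i)) -setIDA; exact: opI.
exists k, (fun i => W i `&` Z), si; split.
- by move=> i; exists (W i).
- by rewrite -setI_bigcupl coverW setIidr.
- by move=> i; exact: schwartz_affine_closed.
- move=> x Zx; rewrite sE; last exact: ZS.
  apply: eq_bigr => i _; congr (if _ then _ else _).
  by apply: asbool_equiv_eq; split=> [|[]//]; split.
Qed.
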